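(* For all $n\ge 0$, $|F_n(321,3142,2143)|=\binom{n}{2}+1$.
   Context: A permutation $\pi$ avoids a classical pattern $p\in S_k$ if no subsequence of $\pi$ of length $k$ is order-isomorphic to $p$. A Fishburn permutation is a permutation $\pi=\pi_1\cdots\pi_n$ of $[n]$ for which there are no indices $i<j$ with $\pi_j<\pi_i<\pi_{i+1}$ and $\pi_i=\pi_j+1$. $F_n(\sigma_1,\dots,\sigma_k)$ denotes the set of Fishburn permutations of length $n$ avoiding each of the classical patterns $\sigma_1,\dots,\sigma_k$ (with $F_0$ containing only the empty permutation). *)

From mathcomp Require Import all_boot all_order all_fingroup.
Set Implicit Arguments. Unset Strict Implicit. Unset Printing Implicit Defensive.

(* A permutation of [n] is represented as s : 'S_n (permutation of {0..n-1});
   pi_i (1-based) corresponds to (s (i-1)).+1, order relations are unchanged. *)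

Definition fishburn n (s : 'S_n) : bool :=
  ~~ [exists i : 'I_n, exists i1 : 'I_n, exists j : 'I_n,
        [&& val i1 == (val i).+1, val i < val j,
            s j < s i, s i < s i1 & val (s i) == (val (s j)).+1]].

(* Classical pattern p (given as the list of its values in one-line notation,
   e.g. [:: 3;2;1] for 321): s contains p if some strictly increasing choice
   of k = size p positions has values order-isomorphic to p. *)
Definition contains n (s : 'S_n) (p : seq nat) : bool :=
  [exists f : {ffun 'I_(size p) -> 'I_n},
    [forall a : 'I_(size p), forall b : 'I_(size p),
       ((val a < val b) ==> (val (f a) < val (f b))) &&
       ((val (s (f a)) < val (s (f b))) == (nth 0 p a < nth 0 p b))]].

Definition avoids n (s : 'S_n) (p : seq nat) : bool := ~~ contains s p.

Definition F_321_3142_2143 n : {set 'S_n} :=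
  [set s : 'S_n | fishburn s &&
     [&& avoids s [:: 3; 2; 1], avoids s [:: 3; 1; 4; 2]
       & avoids s [:: 2; 1; 4; 3] ] ].

From mathcomp Require Import all_boot all_order all_fingroup zify.
Set Implicit Arguments. Unset Strict Implicit. Unset Printing Implicit Defensive.

(* Call (i, j) an inversion of s when i < j and s j < s i.  The proof shows
   that s lies in F_n(321, 3142, 2143) exactly when all inversions of s share
   the same left endpoint ("common source"):
   - a Fishburn permutation avoiding 321 and 3142 also avoids 231 (strong
     induction on the position of the '2', using the Fishburn condition);
   - avoiding 231, 321 and 2143 forces inversions to share their left end;
   - conversely, with a common source no pattern having two inversions with
     distinct left ends can occur, and the Fishburn configuration cannot
     occur either.
   A permutation other than the identity with a common source a is increasing
   away from a, hence equals the cycle [cyc a b] that puts the value b = s a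
   at position a and shifts the block a .. b-1 one step to the right.  So F_n
   consists of the identity and the cycles [cyc a b] with a < b, which are
   pairwise distinct: C(n, 2) + 1 elements. *)

Lemma perm_val_neq n (s : 'S_n) (x y : 'I_n) : (x : nat) <> y -> (s x : nat) <> s y.
Proof. by move=> xy /val_inj/perm_inj/(congr1 val). Qed.

Lemma containsP n (s : 'S_n) (p : seq nat) (f : 'I_(size p) -> 'I_n) :
  (forall a b : 'I_(size p), (a : nat) < b -> (f a : nat) < f b) ->
  (forall a b : 'I_(size p), nth 0 p a < nth 0 p b -> (s (f a) : nat) < s (f b)) ->
  (forall a b : 'I_(size p), nth 0 p a = nth 0 p b -> a = b) -> contains s p.
Proof.
move=> f_incr f_pat p_inj; apply/existsP; exists (finfun f).
apply/forallP=> a; apply/forallP=> b; rewrite !ffunE; apply/andP; split.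
  by apply/implyP; exact: f_incr.
case: (ltngtP (nth 0 p a) (nth 0 p b)) => h.
- by rewrite f_pat.
- by rewrite ltnNge (ltnW (f_pat _ _ h)).
- by rewrite (p_inj _ _ h) ltnn.
Qed.

Lemma contains321 n (s : 'S_n) (i k j : 'I_n) :
  (i : nat) < k -> (k : nat) < j -> (s j : nat) < s k -> (s k : nat) < s i ->
  contains s [:: 3; 2; 1].
Proof.
move=> *; apply: (@containsP _ s _ (fun t => nth i [:: i; k; j] t)).
- by move=> [[|[|[|?]]] ?] [[|[|[|?]]] ?] //= _; lia.
- by move=> [[|[|[|?]]] ?] [[|[|[|?]]] ?] //= _; lia.
- by move=> [[|[|[|?]]] ?] [[|[|[|?]]] ?] //= _; apply: val_inj.
Qed.

Lemma contains3142 n (s : 'S_n) (i j k l : 'I_n) :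
  (i : nat) < j -> (j : nat) < k -> (k : nat) < l ->
  (s j : nat) < s l -> (s l : nat) < s i -> (s i : nat) < s k ->
  contains s [:: 3; 1; 4; 2].
Proof.
move=> *; apply: (@containsP _ s _ (fun t => nth i [:: i; j; k; l] t)).
- by move=> [[|[|[|[|?]]]] ?] [[|[|[|[|?]]]] ?] //= _; lia.
- by move=> [[|[|[|[|?]]]] ?] [[|[|[|[|?]]]] ?] //= _; lia.
- by move=> [[|[|[|[|?]]]] ?] [[|[|[|[|?]]]] ?] //= _; apply: val_inj.
Qed.

Lemma contains2143 n (s : 'S_n) (i j k l : 'I_n) :
  (i : nat) < j -> (j : nat) < k -> (k : nat) < l ->
  (s j : nat) < s i -> (s i : nat) < s l -> (s l : nat) < s k ->
  contains s [:: 2; 1; 4; 3].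
Proof.
move=> *; apply: (@containsP _ s _ (fun t => nth i [:: i; j; k; l] t)).
- by move=> [[|[|[|[|?]]]] ?] [[|[|[|[|?]]]] ?] //= _; lia.
- by move=> [[|[|[|[|?]]]] ?] [[|[|[|[|?]]]] ?] //= _; lia.
- by move=> [[|[|[|[|?]]]] ?] [[|[|[|[|?]]]] ?] //= _; apply: val_inj.
Qed.

Lemma fishburnP n (s : 'S_n) (i i1 j : 'I_n) : fishburn s ->
  (i1 : nat) = i.+1 -> (i : nat) < j -> (s i : nat) < s i1 ->
  (s i : nat) = (s j).+1 -> False.
Proof.
move=> /negP fs i1E ij si_i1 sij; apply: fs.
apply/existsP; exists i; apply/existsP; exists i1; apply/existsP; exists j.
by rewrite /= i1E sij !eqxx ij /= ltnSn -sij si_i1.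
Qed.

Definition common_source n (s : 'S_n) : Prop :=
  forall i j k l : 'I_n, (i : nat) < j -> (s j : nat) < s i ->
    (k : nat) < l -> (s l : nat) < s k -> i = k.

Definition avoids231 n (s : 'S_n) : Prop :=
  forall i k j : 'I_n, (i : nat) < k -> (k : nat) < j ->
    (s j : nat) < s i -> (s i : nat) < s k -> False.

(* A Fishburn permutation avoiding 321 and 3142 avoids 231.  Given a 231
   occurrence (i, k, j), by strong induction on i, look at s (i+1): below s i it yields
   3142 or 321; above s i, the value s i - 1 sits either before i (a smaller
   231 occurrence) or after i (a Fishburn configuration). *)
Lemma fishburn_avoids231 n (s : 'S_n) : fishburn s ->
  avoids s [:: 3; 2; 1] -> avoids s [:: 3; 1; 4; 2] -> avoids231 s.
Proof.
move=> fs /negP a321 /negP a3142 i.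
have [m] := ubnP (i : nat); elim: m i => // m IH i /ltnSE i_le k j ik kj sji sik.
have i1_lt : i.+1 < n by have := ltn_ord k; lia.
pose i1 : 'I_n := Ordinal i1_lt.
have i1E : (i1 : nat) = i.+1 by [].
have i1_neq_i := @perm_val_neq _ s i1 i.
case: (ltngtP (s i1) (s i)) => [s_i1_lt | s_i1_gt | ]; last by lia.
- have i1k : (i1 : nat) < k.
    case: (ltngtP i1 k) => // [|/val_inj i1k]; first by lia.
    by move: s_i1_lt; rewrite i1k; lia.
  case: (ltngtP (s i1) (s j)) => h.
  + by apply: a3142; apply: (@contains3142 _ s i i1 k j) => //=; lia.
  + by apply: a321; apply: (@contains321 _ s i i1 j) => //=; lia.
  + by have := @perm_val_neq _ s i1 j; rewrite h; lia.
- have pred_lt : (s i).-1 < n by have := ltn_ord (s i); lia.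
  pose r := (s^-1)%g (Ordinal pred_lt).
  have sr : (s r : nat) = (s i).-1 by rewrite /r permKV.
  have r_neq_j := @perm_val_neq _ s r j.
  have r_neq_i1 := @perm_val_neq _ s r i1.
  case: (ltngtP r i) => hr.
  + by apply: (IH r _ i j) => //; lia.
  + by apply: (@fishburnP _ s i i1 r fs erefl) => //; lia.
  + by move: sr; rewrite (val_inj hr); lia.
Qed.

(* Avoiding 231, 321 and 2143 forces a common source: two inversions (i, j),
   (k, l) with i < k produce one of these patterns. *)
Lemma common_source_of_avoidance n (s : 'S_n) : avoids231 s ->
  avoids s [:: 3; 2; 1] -> avoids s [:: 2; 1; 4; 3] -> common_source s.
Proof.
move=> a231 /negP a321 /negP a2143.
have ordered : forall i j k l : 'I_n, (i : nat) < j -> (s j : nat) < s i ->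
    (k : nat) < l -> (s l : nat) < s k -> (i : nat) < k -> False.
  move=> i j k l ij sji kl slk ik.
  have k_neq_i := @perm_val_neq _ s k i.
  have l_neq_i := @perm_val_neq _ s l i.
  case: (ltngtP k j) => hkj.
  - case: (ltngtP (s k) (s i)) => h; last by lia.
    + by apply: a321; apply: (@contains321 _ s i k l) => //; lia.
    + exact: (a231 i k j).
  - case: (ltngtP (s l) (s i)) => h; last by lia.
    + case: (ltngtP (s k) (s i)) => h'; last by lia.
      * by apply: a321; apply: (@contains321 _ s i k l) => //; lia.
      * exact: (a231 i k l).
    + by apply: a2143; apply: (@contains2143 _ s i j k l) => //; lia.
  - move/val_inj: hkj => hkj; subst k.
    by apply: a321; apply: (@contains321 _ s i j l) => //; lia.
move=> i j k l ij sji kl slk.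
case: (ltngtP i k) => h; last exact: val_inj.
- by case: (ordered i j k l).
- by case: (ordered k l i j).
Qed.

Lemma F_common_source n (s : 'S_n) :
  s \in F_321_3142_2143 n -> common_source s.
Proof.
rewrite inE => /andP [fs /and3P [a321 a3142 a2143]].
exact: common_source_of_avoidance (fishburn_avoids231 fs a321 a3142) a321 a2143.
Qed.

Lemma common_source_avoids n (s : 'S_n) (p : seq nat) (a b c d : 'I_(size p)) :
  common_source s ->
  (a : nat) < b -> nth 0 p b < nth 0 p a ->
  (c : nat) < d -> nth 0 p d < nth 0 p c -> a != c -> avoids s p.
Proof.
move=> cs ab pba cd pdc; apply: contraNN => /existsP [f /forallP f_pat].
have f_inv (x y : 'I_(size p)) : (x : nat) < y -> nth 0 p y < nth 0 p x ->
    (f x : nat) < f y /\ (s (f y) : nat) < s (f x).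
  move=> xy pyx; have /andP [/implyP incr /eqP ord] := forallP (f_pat x) y.
  have /andP [_ /eqP ord'] := forallP (f_pat y) x.
  by split; [exact: incr | rewrite ord'].
have [fab sfab] := f_inv _ _ ab pba; have [fcd sfcd] := f_inv _ _ cd pdc.
have fac : f a = f c by exact: cs fab sfab fcd sfcd.
apply/eqP; apply: val_inj; case: (ltngtP a c) => // h.
- by have /andP [/implyP /(_ h)] := forallP (f_pat a) c; rewrite fac ltnn.
- by have /andP [/implyP /(_ h)] := forallP (f_pat c) a; rewrite fac ltnn.
Qed.

(* Conversely, a common source puts s in F_n(321, 3142, 2143).  For the
   Fishburn condition: if s i < s (i+1) and s j < s i with i < j, then both
   (i, j) and (i+1, j) are inversions. *)
Lemma common_source_F n (s : 'S_n) :
  common_source s -> s \in F_321_3142_2143 n.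
Proof.
move=> cs; rewrite inE; apply/andP; split.
  apply/negP => /existsP [i /existsP [i1 /existsP [j /and5P [/eqP /= i1E /= ij sji si_i1 _]]]].
  have i1j : (i1 : nat) < j.
    case: (ltngtP i1 j) => // [|/val_inj i1j]; first by lia.
    by move: si_i1; rewrite i1j; lia.
  by have := cs i j i1 j ij sji i1j (ltn_trans sji si_i1) => /(congr1 (@nat_of_ord n)); lia.
apply/and3P; split.
- exact: (@common_source_avoids _ _ [:: 3; 2; 1] (@Ordinal 3 0 isT)
            (@Ordinal 3 1 isT) (@Ordinal 3 1 isT) (@Ordinal 3 2 isT)).
- exact: (@common_source_avoids _ _ [:: 3; 1; 4; 2] (@Ordinal 4 0 isT)
            (@Ordinal 4 1 isT) (@Ordinal 4 2 isT) (@Ordinal 4 3 isT)).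
- exact: (@common_source_avoids _ _ [:: 2; 1; 4; 3] (@Ordinal 4 0 isT)
            (@Ordinal 4 1 isT) (@Ordinal 4 2 isT) (@Ordinal 4 3 isT)).
Qed.

(* [cyc a b] (for a < b) fixes the positions outside a .. b, puts the value b
   at position a and the values a .. b-1 at positions a+1 .. b.  For b <= a
   it is the identity. *)
Definition cyc_val n (a b x : 'I_n) : nat :=
  if ((a : nat) < b) && ((x : nat) == a) then (b : nat)
  else if ((a : nat) < x) && ((x : nat) <= b) then (x : nat).-1 else x.

Lemma cyc_val_lt n (a b x : 'I_n) : cyc_val a b x < n.
Proof. by have := ltn_ord x; have := ltn_ord b; rewrite /cyc_val; do !case: ifP; lia. Qed.

Lemma cyc_fun_inj n (a b : 'I_n) : injective (fun x => Ordinal (cyc_val_lt a b x)).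
Proof.
move=> x y /(congr1 (@nat_of_ord n)) /=; rewrite /cyc_val => h; apply: val_inj => /=.
by move: h; do !case: ifP; lia.
Qed.

Definition cyc n (a b : 'I_n) : 'S_n := perm (@cyc_fun_inj n a b).

Lemma cycE n (a b x : 'I_n) : (cyc a b x : nat) = cyc_val a b x.
Proof. by rewrite permE. Qed.

Definition increasing_off n (s : 'S_n) (a : 'I_n) : Prop :=
  forall x y : 'I_n, (x : nat) <> a -> (y : nat) <> a -> (x : nat) < y ->
    (s x : nat) < s y.

Section CycleProperties.
Variables (n : nat) (a b : 'I_n).
Hypothesis ab : (a : nat) < b.

Lemma cyc_at_source : (cyc a b a : nat) = b.
Proof. by rewrite cycE /cyc_val ab eqxx. Qed.

Lemma cyc_increasing_off : increasing_off (cyc a b) a.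
Proof. by move=> x y; rewrite !cycE /cyc_val; do !case: ifP; lia. Qed.

Lemma cyc_inversion (i j : 'I_n) : (i : nat) < j -> (cyc a b j : nat) < cyc a b i -> i = a.
Proof.
move=> ij; rewrite !cycE /cyc_val => h.
suff : (i : nat) = a by move/val_inj.
by move: ij h; do !case: ifP; lia.
Qed.

Lemma cyc_common_source : common_source (cyc a b).
Proof. by move=> i j k l ij ji kl lk; rewrite (cyc_inversion ij ji) (cyc_inversion kl lk). Qed.

End CycleProperties.

(* Induction step for [increasing_off_unique]: if s and t agree at a and
   below x, and t is increasing off a, then s x < t x is impossible, since
   the position of s x under t can be neither below nor above x. *)
Lemma increasing_off_step n (s t : 'S_n) (a x : 'I_n) :
  s a = t a -> increasing_off t a ->
  (forall y : 'I_n, (y : nat) < x -> s y = t y) -> (x : nat) <> a ->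
  ~ (s x : nat) < t x.
Proof.
move=> sta t_incr agree xa sxt.
pose y := (t^-1)%g (s x).
have ty : t y = s x by rewrite /y permKV.
have ya : (y : nat) <> a.
  by move/val_inj=> ya; move: ty; rewrite ya -sta => /perm_inj ax; rewrite ax in xa.
case: (ltngtP y x) => h.
- by move: (agree y h); rewrite ty => /perm_inj yx; rewrite yx ltnn in h.
- by have := t_incr x y xa ya h; rewrite ty; lia.
- by move: sxt; rewrite -ty (val_inj h) ltnn.
Qed.

Lemma increasing_off_unique n (s t : 'S_n) (a : 'I_n) : s a = t a ->
  increasing_off s a -> increasing_off t a -> s = t.
Proof.
move=> sta s_incr t_incr; apply/permP => x.
have [m] := ubnP (x : nat); elim: m x => // m IH x /ltnSE x_le.
have agree (y : 'I_n) : (y : nat) < x -> s y = t y.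
  by move=> yx; apply: IH; lia.
have [/val_inj -> // | /eqP xa] := eqVneq (x : nat) a.
case: (ltngtP (s x) (t x)) => h; last exact: val_inj.
- by case: (increasing_off_step sta t_incr agree xa h).
- have agree' (y : 'I_n) : (y : nat) < x -> t y = s y by move/agree.
  by case: (increasing_off_step (esym sta) s_incr agree' xa h).
Qed.

Lemma common_source_increasing_off n (s : 'S_n) (a p : 'I_n) :
  common_source s -> (a : nat) < p -> (s p : nat) < s a -> increasing_off s a.
Proof.
move=> cs ap spa x y xa ya xy; case: (ltngtP (s x) (s y)) => // h.
- by move: xa; rewrite (cs x y a p xy h ap spa).
- by move: xy; rewrite (perm_inj (val_inj h)) ltnn.
Qed.

(* A permutation other than the identity with a common source is a cycle
   [cyc a b] with a < b: a is its first non-fixed position. *)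
Lemma common_source_cyc n (s : 'S_n) : common_source s -> s != 1%g ->
  exists a : 'I_n, (a : nat) < s a /\ s = cyc a (s a).
Proof.
move=> cs s_neq1.
have [x0 sx0] : exists x0, s x0 != x0.
  apply/existsP; apply: contraNT s_neq1 => /existsPn fixed.
  by apply/eqP/permP => x; rewrite perm1; apply/eqP/negPn/fixed.
case: (arg_minnP (P := fun x => s x != x) (@nat_of_ord n) sx0) => a sa a_min.
have fixed (y : 'I_n) : (y : nat) < a -> s y = y.
  by move=> ya; apply/eqP; apply: contraTT ya => /a_min; rewrite -leqNgt.
have a_lt_sa : (a : nat) < s a.
  case: (ltngtP a (s a)) => // [/fixed | /val_inj e]; last by rewrite -e eqxx in sa.
  by move/perm_inj=> e; rewrite e eqxx in sa.
pose p := (s^-1)%g a.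
have sp : s p = a by rewrite /p permKV.
have a_lt_p : (a : nat) < p.
  case: (ltngtP a p) => // [pa | /val_inj e].
    by move: (fixed p pa); rewrite sp => ap; rewrite -ap ltnn in pa.
  by move: sa; rewrite {1}e sp eqxx.
exists a; split=> //.
apply: (increasing_off_unique (a := a)).
- by apply: val_inj; rewrite /= cycE /cyc_val a_lt_sa eqxx.
- by apply: (common_source_increasing_off cs a_lt_p); rewrite sp.
- exact: cyc_increasing_off.
Qed.

Lemma card_lt_pairs n : #|[set p : 'I_n * 'I_n | (p.2 : nat) < p.1]| = 'C(n, 2).
Proof.
rewrite -sum1_card -bin2_sum big_mkord.
rewrite (eq_bigl (fun p : 'I_n * 'I_n => xpredT p.1 && ((p.2 : nat) < p.1))); last first.
  by move=> p; rewrite inE.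
rewrite -(pair_big_dep xpredT (fun b a : 'I_n => (a : nat) < b) (fun _ _ => 1)) /=.
apply: eq_bigr => b _.
by rewrite (big_ord_narrow (ltnW (ltn_ord b))) sum1_card card_ord.
Qed.

(* Distinct pairs a < b give distinct cycles, as b = [cyc a b] a can only be
   the value of [cyc a' b'] at a when a = a' and b = b'. *)
Lemma cyc_inj n (a b a' b' : 'I_n) : (a : nat) < b -> (a' : nat) < b' ->
  cyc a b = cyc a' b' -> a = a' /\ b = b'.
Proof.
move=> ab ab' /(congr1 (fun s : 'S_n => (s a : nat))).
rewrite cyc_at_source // cycE /cyc_val => e.
suff [/val_inj -> /val_inj ->] : (a : nat) = a' /\ (b : nat) = b' by [].
by move: e; do !case: ifP; lia.
Qed.

Lemma cyc_neq1 n (a b : 'I_n) : (a : nat) < b -> cyc a b != 1%g.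
Proof.
move=> ab; apply/eqP => /(congr1 (fun s : 'S_n => (s a : nat))).
by rewrite cyc_at_source // perm1; lia.
Qed.

Theorem mainTheorem10 (n : nat) : #|F_321_3142_2143 n| = 'C(n, 2) + 1.
Proof.
pose pairs := [set p : 'I_n * 'I_n | (p.2 : nat) < p.1].
pose cyc_of (p : 'I_n * 'I_n) : 'S_n := cyc p.2 p.1.
have F_eq : F_321_3142_2143 n = 1%g |: (cyc_of @: pairs).
  apply/setP => s; rewrite in_setU1; apply/idP/orP.
    move=> /F_common_source cs; have [-> | s_neq1] := eqVneq s 1%g; first by left.
    have [a [a_lt_sa ->]] := common_source_cyc cs s_neq1.
    by right; apply/imsetP; exists (s a, a); rewrite ?inE.
  case=> [/eqP -> | /imsetP [p]]; last first.
    by rewrite inE => p_lt ->; exact/common_source_F/cyc_common_source.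
  by apply: common_source_F => i j k l ij; rewrite !perm1; lia.
have id_notin : 1%g \notin cyc_of @: pairs.
  by apply/imsetP => -[p]; rewrite inE => /cyc_neq1 /eqP neq1 /esym.
have cyc_of_inj : {in pairs &, injective cyc_of}.
  by move=> [b a] [b' a']; rewrite !inE /= => ab ab' /(cyc_inj ab ab') [-> ->].
by rewrite F_eq cardsU1 id_notin card_in_imset // card_lt_pairs addnC.
Qed.
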